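(* Let $A \subseteq B$ be an integral extension of commutative rings, and suppose that $B$ is sublocalizable. Then $A$ is sublocalizable, with unique local subring (its sublocalization) $[1]^{A^\times}_A = [1]^{B^\times}_B \cap A$, which has maximal ideal $J(A) = J(B) \cap A$ and units $A^\times = B^\times \cap A$.
   Context: $A^\times$ is the unit group and $J(A)$ the Jacobson radical. A commutative ring $A$ is sublocalizable if it is nontrivial and $u+v\in A^\times\cup J(A)$ for all $u,v\in A^\times$; its sublocalization is the local subring $A^\times\cup J(A)$. For $T\subseteq A$, $[1]^T_A$ is the smallest additive subgroup $F$ of $A$ containing $1$ such that $ta\in F$ with $t\in T$, $a\in A$ implies $a\in F$; $[1]^{A^\times}_A$ equals the subring of $A$ generated by $A^\times$. *)

From HB Require Import structures.
From mathcomp Require Import all_boot all_order all_algebra.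
Set Implicit Arguments. Unset Strict Implicit. Unset Printing Implicit Defensive.
Import GRing.Theory.
Local Open Scope ring_scope.

Section RingNotions.
Variable R : comNzRingType.

Definition is_unit (x : R) : Prop := exists y : R, x * y = 1.

Definition is_ideal (I : R -> Prop) : Prop :=
  [/\ I 0, (forall x y, I x -> I y -> I (x + y)) & (forall r x, I x -> I (r * x))].

Definition is_maximal_ideal (M : R -> Prop) : Prop :=
  [/\ is_ideal M, ~ M 1 &
      forall I : R -> Prop, is_ideal I -> (forall x, M x -> I x) ->
        I 1 \/ (forall x, I x -> M x)].

Definition jacobson (x : R) : Prop :=
  forall M : R -> Prop, is_maximal_ideal M -> M x.

Definition sublocalizable : Prop :=
  (1 != 0 :> R) /\
  forall u v : R, is_unit u -> is_unit v -> is_unit (u + v) \/ jacobson (u + v).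

Definition sublocalization (x : R) : Prop := is_unit x \/ jacobson x.

Definition one_closed (T : R -> Prop) (F : R -> Prop) : Prop :=
  [/\ F 0, F 1, (forall x y, F x -> F y -> F (x - y)) &
      (forall t a, T t -> F (t * a) -> F a)].

(* [1]^T_R : the smallest such F (intersection of all of them) *)
Definition one_hull (T : R -> Prop) (x : R) : Prop :=
  forall F : R -> Prop, one_closed T F -> F x.

Definition subring_pred (S : R -> Prop) : Prop :=
  [/\ S 0, S 1, (forall x y, S x -> S y -> S (x - y)) &
      (forall x y, S x -> S y -> S (x * y))].

Definition local_subring_with_max (S m : R -> Prop) : Prop :=
  subring_pred S /\
  forall x, S x -> ((~ exists y, S y /\ x * y = 1) <-> m x).

End RingNotions.

Definition integral_over (A B : comNzRingType) (f : A -> B) : Prop :=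
  forall b : B, exists p : {poly A}, p \is monic /\ root (map_poly f p) b.

From HB Require Import structures.
From mathcomp Require Import all_boot all_order all_algebra.
From mathcomp Require classical_sets.
From Stdlib Require Import Classical.
Set Implicit Arguments. Unset Strict Implicit.
Import GRing.Theory.
Local Open Scope ring_scope.

(* If f(c) d = 1 modulo an ideal N of B, multiplying a monic equation of d of
   degree n by c^n gives 1 + c s in N for some s in A, so c is invertible modulo
   the contraction of N. For N = 0 this gives A^× = B^× ∩ A; for N maximal it
   shows that contractions of maximal ideals are maximal, so J(A) ⊆ J(B); and
   J(B) ∩ A ⊆ J(A) because x is in J exactly when every 1 + r x is a unit.
   Hence A^× ∪ J(A) is the trace of B^× ∪ J(B) and sublocalizability descends.
   In a sublocalizable ring R^× ∪ J(R) is closed under subtraction, hence a local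
   subring with maximal ideal J(R), and it is [1]^{R^×}: every admissible F
   contains each unit u (as u^-1 u = 1) and each j in J(R) (as j = (1 + j) - 1). *)

Section IdealTheory.
Variable R : comNzRingType.
Implicit Types (I M : R -> Prop) (x y u r : R).

Lemma idealN I x : is_ideal I -> I x -> I (- x).
Proof. by case=> _ _ IM Ix; rewrite -mulN1r; apply: IM. Qed.

Lemma idealB I x y : is_ideal I -> I x -> I y -> I (x - y).
Proof. by move=> II Ix Iy; case: (II) => _ ID _; apply: ID => //; apply: idealN. Qed.

Lemma idealMr I x r : is_ideal I -> I x -> I (x * r).
Proof. by case=> _ _ IM Ix; rewrite mulrC; apply: IM. Qed.

Lemma ideal_unit1 I u : is_ideal I -> I u -> is_unit u -> I 1.
Proof. by move=> II Iu [v <-]; apply: idealMr. Qed.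

Lemma is_unit1 : is_unit (1 : R).
Proof. by exists 1; rewrite mulr1. Qed.

Lemma is_unitM u v : is_unit u -> is_unit v -> is_unit (u * v).
Proof. by case=> a ua [b vb]; exists (a * b); rewrite mulrACA ua vb mulr1. Qed.

Lemma is_unitN u : is_unit u -> is_unit (- u).
Proof. by case=> a ua; exists (- a); rewrite mulrNN. Qed.

Lemma is_unit0 : ~ is_unit (0 : R).
Proof. by case=> y /esym/eqP; rewrite mul0r oner_eq0. Qed.

Lemma jacobson_ideal : is_ideal (@jacobson R).
Proof.
split=> [M [[]]//|x y Jx Jy M MM|r x Jx M MM]; case: (MM) => [[_ ID IM] _ _].
- by apply: ID; [apply: Jx | apply: Jy].
- by apply: IM; apply: Jx.
Qed.

Lemma jacobson0 : jacobson (0 : R).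
Proof. by case: jacobson_ideal. Qed.

Lemma jacobsonMl r x : jacobson x -> jacobson (r * x).
Proof. by case: jacobson_ideal => _ _; apply. Qed.

Lemma jacobsonMr r x : jacobson x -> jacobson (x * r).
Proof. exact: idealMr jacobson_ideal. Qed.

(* Zorn's lemma is applied to proper sets closed under the ideal operations
   whose nonempty members contain y: 0 cannot be required, since the union of
   the empty chain is empty. *)
Lemma nonunit_maximal_ideal y : ~ is_unit y -> exists2 M, is_maximal_ideal M & M y.
Proof.
move=> nUy.
pose P I := [/\ ~ I 1, (forall x z, I x -> I z -> I (x + z)),
  (forall r x, I x -> I (r * x)) & (forall x, I x -> I y)].
have [|M [[M1 MD MM My] Mmax]] := @classical_sets.Zorn_bigcup R P.
  move=> F FP Ftot; split.
  - by case=> X /FP[].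
  - move=> x z [X FX Xx] [Z FZ Zz].
    have [XZ|ZX] := Ftot X Z FX FZ.
    + by exists Z => //; case: (FP Z FZ) => _ ZD _ _; apply: ZD => //; apply: XZ.
    + by exists X => //; case: (FP X FX) => _ XD _ _; apply: XD => //; apply: ZX.
  - by move=> r x [X FX Xx]; exists X => //; case: (FP X FX) => _ _ XM _; apply: XM.
  - by move=> x [X FX Xx]; exists X => //; case: (FP X FX) => _ _ _ Xy; apply: Xy Xx.
have {}My : M y.
  (* otherwise M is empty, hence properly contained in the principal ideal (y) *)
  apply: NNPP => nMy; pose Y x := exists r, x = r * y.
  apply: (Mmax Y); split.
  - by move=> x /My /nMy.
  - by move=> /(_ y) YM; apply/nMy/YM; exists 1; rewrite mul1r.
  - by case=> r r1; apply: nUy; exists r; rewrite mulrC r1.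
  - by move=> x z [r ->] [s ->]; exists (r + s); rewrite mulrDl.
  - by move=> s x [r ->]; exists (s * r); rewrite mulrA.
  - by move=> x _; exists 1; rewrite mul1r.
exists M => //; split=> //; first by split=> //; rewrite -(mul0r y); apply: MM.
move=> I [_ ID IM] MI; have [|I1] := classic (I 1); [by left | right=> x Ix].
apply: NNPP => nMx; apply: (Mmax I); first by split=> // /(_ x Ix).
by split=> // z _; apply: MI.
Qed.

Lemma maximal_ideal_add1 M x :
  is_maximal_ideal M -> ~ M x -> exists m r, M m /\ m + r * x = 1.
Proof.
case=> [[M0 MD MM] _ Mmax] Mx.
pose Mx' y := exists m r, M m /\ m + r * x = y.
have idealMx' : is_ideal Mx'.
  split; first by exists 0, 0; rewrite mul0r addr0.
  - move=> _ _ [m [r [Mm <-]]] [m' [r' [Mm' <-]]].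
    by exists (m + m'), (r + r'); rewrite mulrDl addrACA; split=> //; apply: MD.
  - move=> s _ [m [r [Mm <-]]].
    by exists (s * m), (s * r); rewrite mulrDr mulrA; split=> //; apply: MM.
have MMx' m : M m -> Mx' m by exists m, 0; rewrite mul0r addr0.
have [//|Mx'M] := Mmax _ idealMx' MMx'.
by case: Mx; apply: Mx'M; exists 0, 1; rewrite mul1r add0r.
Qed.

Lemma is_unitDj u j : is_unit u -> jacobson j -> is_unit (u + j).
Proof.
move=> Uu Jj; apply: NNPP => /nonunit_maximal_ideal[M MM Muj].
case: (MM) => IM M1 _; apply/M1/(ideal_unit1 IM _ Uu).
by rewrite -(addrK j u); apply: idealB => //; apply: Jj.
Qed.

Lemma jacobsonP x : jacobson x <-> forall r, is_unit (1 + r * x).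
Proof.
split=> [Jx r | U1x M MM]; first exact: is_unitDj is_unit1 (jacobsonMl r Jx).
apply: NNPP => /(maximal_ideal_add1 MM)[m [r [Mm mrx1]]].
case: MM => IM M1 _; apply/M1/(ideal_unit1 IM Mm).
by have := U1x (- r); rewrite mulNr -mrx1 addrK.
Qed.

Lemma jacobson_nonunit x : jacobson x -> ~ is_unit x.
Proof.
move=> /jacobsonP U1x [y xy]; apply: is_unit0.
by have := U1x (- y); rewrite mulNr mulrC xy subrr.
Qed.

End IdealTheory.

Arguments is_unit1 {R}.
Arguments jacobson_ideal {R}.

Section Sublocalization.
Variable R : comNzRingType.
Implicit Types (F : R -> Prop) (x y : R).

Lemma sublocalizationM x y :
  sublocalization x -> sublocalization y -> sublocalization (x * y).
Proof.
case=> [Ux|Jx] [Uy|Jy]; [by left; apply: is_unitM | right..].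
- exact: jacobsonMl.
- exact: jacobsonMr.
- exact: jacobsonMl.
Qed.

Lemma one_closed_units_sublocalization F x :
  one_closed (@is_unit R) F -> sublocalization x -> F x.
Proof.
case=> _ F1 FB Fdiv.
have FU u : is_unit u -> F u.
  by case=> v uv; apply: (Fdiv v); [exists u | ]; rewrite mulrC ?uv.
case=> [/FU //|Jx]; rewrite -(addKr 1 x) addrC.
exact: FB (FU _ (is_unitDj is_unit1 Jx)) F1.
Qed.

Hypothesis subloc_R : sublocalizable R.

Lemma sublocalizationB x y :
  sublocalization x -> sublocalization y -> sublocalization (x - y).
Proof.
have [_ subloc_add] := subloc_R.
case=> [Ux|Jx] [Uy|Jy].
- exact: subloc_add Ux (is_unitN Uy).
- by left; apply: is_unitDj => //; apply: idealN jacobson_ideal Jy.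
- by left; rewrite addrC; apply: is_unitDj (is_unitN Uy) Jx.
- by right; apply: idealB jacobson_ideal Jx Jy.
Qed.

Lemma sublocalization_local : local_subring_with_max (@sublocalization R) (@jacobson R).
Proof.
split.
  split; [right; exact: jacobson0 | left; exact: is_unit1 |
          exact: sublocalizationB | exact: sublocalizationM].
move=> x Sx; split=> [noinv | Jx [y [_ xy]]]; last by apply: jacobson_nonunit Jx _; exists y.
case: Sx => // -[y xy]; case: noinv; exists y; split=> //.
by left; exists x; rewrite mulrC.
Qed.

Lemma one_closed_sublocalization : one_closed (@is_unit R) (@sublocalization R).
Proof.
split; [right; exact: jacobson0 | left; exact: is_unit1 | exact: sublocalizationB |].
move=> t a [s ts] [[w taw] | Jta]; first by left; exists (t * w); rewrite mulrCA mulrA.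
by right; rewrite -[a]mul1r -ts mulrAC; apply: jacobsonMr.
Qed.

Lemma sublocalization_one_hull x : sublocalization x <-> one_hull (@is_unit R) x.
Proof.
split=> [Sx F Fcl | hull_x]; first exact: one_closed_units_sublocalization Fcl Sx.
exact: hull_x one_closed_sublocalization.
Qed.

End Sublocalization.

Section IntegralExtension.
Variables (A B : comNzRingType) (f : {rmorphism A -> B}).
Implicit Types (N : B -> Prop) (a c : A).

Lemma ideal_preimage N : is_ideal N -> is_ideal (fun a => N (f a)).
Proof.
case=> N0 ND NM; split=> [|x y|r x]; rewrite ?rmorph0 ?rmorphD ?rmorphM //.
- exact: ND.
- exact: NM.
Qed.

Lemma is_unit_rmorph a : is_unit a -> is_unit (f a).
Proof. by case=> y ay; exists (f y); rewrite -rmorphM ay rmorph1. Qed.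

(* c^n p(d) = \sum_i p_i c^(n - i) (c d)^i, and each (c d)^i is 1 modulo N. *)
Lemma root_scaled_in_ideal N (p : {poly A}) c d :
  is_ideal N -> root (map_poly f p) d -> N (f c * d - 1) ->
  N (f (\sum_(i < size p) p`_i * c ^+ ((size p).-1 - i))).
Proof.
move=> IN /rootP pd0 cd1; set n := (size p).-1.
have cdX1 i : N ((f c * d) ^+ i - 1) by rewrite subrX1; apply: idealMr.
have expand : f c ^+ n * (map_poly f p).[d] =
    f (\sum_(i < size p) p`_i * c ^+ (n - i))
    + \sum_(i < size p) f (p`_i * c ^+ (n - i)) * ((f c * d) ^+ i - 1).
  rewrite (horner_coef_wide _ (size_poly _ _)) mulr_sumr rmorph_sum -big_split /=.
  apply: eq_bigr => i _; have i_le_n : (i <= n)%N.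
    by rewrite -ltnS (ltn_predK (ltn_ord i)).
  rewrite coef_poly ltn_ord mulrBr mulr1 addrCA subrr addr0.
  rewrite !rmorphM !rmorphXn exprMn -{1}(subnK i_le_n) exprD.
  by rewrite mulrCA !mulrA.
have : N (- \sum_(i < size p) f (p`_i * c ^+ (n - i)) * ((f c * d) ^+ i - 1)).
  apply: idealN => //; apply: (big_ind N) => [||i _]; first by case: IN.
  - by case: IN.
  - by rewrite mulrC; apply: idealMr.
by move/eqP: expand; rewrite pd0 mulr0 eq_sym addr_eq0 => /eqP <-.
Qed.

Hypothesis integral_f : integral_over f.

Lemma integral_inverse_mod N c d :
  is_ideal N -> N (f c * d - 1) -> exists a, N (f (c * a - 1)).
Proof.
move=> IN cd1; have [p [monic_p root_pd]] := integral_f d.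
have := root_scaled_in_ideal IN root_pd cd1; set n := (size p).-1.
have size_p : size p = n.+1 by rewrite prednK // size_poly_gt0 monic_neq0.
have lead_p : p`_n = 1 := monicP monic_p.
rewrite size_p big_ord_recr /= lead_p subnn expr0 mulr1.
have -> : \sum_(i < n) p`_i * c ^+ (n - i) = c * \sum_(i < n) p`_i * c ^+ (n - i.+1).
  by rewrite mulr_sumr; apply: eq_bigr => i _; rewrite -(subnSK (ltn_ord i)) exprS mulrCA.
set s := \sum_(i < n) _ => Ncs1; exists (- s).
by rewrite mulrN -opprD rmorphN; apply: idealN.
Qed.

Lemma maximal_ideal_preimage N : is_maximal_ideal N -> is_maximal_ideal (fun a => N (f a)).
Proof.
move=> NM; case: (NM) => IN N1 _; split; [exact: ideal_preimage | by rewrite rmorph1 |].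
move=> I II NI; have [|Iout] := classic (forall x, I x -> N (f x)); [by right | left].
have [x Ix Nfx] : exists2 x, I x & ~ N (f x).
  by apply: NNPP => no_x; apply: Iout => x Ix; apply: NNPP => Nfx; apply: no_x; exists x.
have [m [b [Nm mb1]]] := maximal_ideal_add1 NM Nfx.
have /(integral_inverse_mod IN)[a Nxa1] : N (f x * b - 1).
  by rewrite -mb1 opprD addrCA mulrC subrr addr0; apply: idealN.
have -> : (1 : A) = x * a - (x * a - 1) by rewrite opprB addrC subrK.
by apply: idealB => //; [apply: idealMr | apply: NI].
Qed.

Hypothesis injective_f : injective f.

Lemma is_unit_integral a : is_unit a <-> is_unit (f a).
Proof.
split=> [|[d ad1]]; first exact: is_unit_rmorph.
have ideal_zero : is_ideal (fun y : B => y = 0).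
  by split=> [|x y -> ->|r x ->]; rewrite ?addr0 ?mulr0.
have fad1 : f a * d - 1 = 0 by rewrite ad1 subrr.
have [b /eqP] := integral_inverse_mod ideal_zero fad1.
by rewrite -(rmorph0 f) (inj_eq injective_f) subr_eq0 => /eqP; exists b.
Qed.

Lemma jacobson_integral a : jacobson a <-> jacobson (f a).
Proof.
split=> [Ja N NM | Jfa]; first exact: Ja _ (maximal_ideal_preimage NM).
apply/jacobsonP => r; apply/is_unit_integral; rewrite rmorphD rmorph1 rmorphM.
by move/jacobsonP: Jfa; apply.
Qed.

Lemma sublocalization_integral a : sublocalization a <-> sublocalization (f a).
Proof. by rewrite /sublocalization is_unit_integral jacobson_integral. Qed.

Lemma sublocalizable_integral : sublocalizable B -> sublocalizable A.
Proof.
case=> _ subloc_add; split=> [|u v /is_unit_integral Uu /is_unit_integral Uv].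
  exact: oner_neq0.
by apply/sublocalization_integral; rewrite rmorphD; apply: subloc_add.
Qed.

End IntegralExtension.

Theorem corollary9p19 (A B : comNzRingType) (f : {rmorphism A -> B}) :
  injective f -> integral_over f -> sublocalizable B ->
  sublocalizable A /\
  local_subring_with_max (@sublocalization A) (@jacobson A) /\
  [/\       (forall a : A, sublocalization a <-> one_hull (@is_unit A) a),
      (forall a : A, one_hull (@is_unit A) a <-> one_hull (@is_unit B) (f a)),
      (forall a : A, jacobson a <-> jacobson (f a)) &
      (forall a : A, is_unit a <-> is_unit (f a))].
Proof.
move=> injective_f integral_f subloc_B.
have subloc_A := sublocalizable_integral integral_f injective_f subloc_B.
split=> //; split; first exact: sublocalization_local.
split=> a; first exact: sublocalization_one_hull.
- rewrite -sublocalization_one_hull // -sublocalization_one_hull //.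
  exact: sublocalization_integral.
- exact: jacobson_integral.
- exact: is_unit_integral.
Qed.
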